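(* Let $U$ be a frame-acyclic molecule and $k\in\mathbb{N}$ with $\mathrm{frdim}\,U\le k\le\dim U-1$. Then every $k$-pre-ordering of $U$ is refined by a $k$-ordering of $U$.
   Context: Oriented graded posets: graded posets ($\dim x$ the grade) with, for each $x$, a partition of the elements covered by $x$ into $\partial^-x$ and $\partial^+x$. $\mathrm{cl}\{x\}$ is the downward closure. For closed $U$, $k\ge0$, $\partial_k^\alpha U$ is the downward closure of the $x\in U$ with either $\dim x=k$ and no $y\in U$ with $x\in\partial^{-\alpha}y$, or $x$ maximal with $\dim x<k$. Molecules: smallest isomorphism-closed class containing the point, closed under pasting $U\#_kV$ (pushout along $\partial_k^+U\cong\partial_k^-V$), and containing $U\Rightarrow V$ (pushout along $\partial_{m-1}U\cong\partial_{m-1}V$ plus a new top element with inputs the maximal elements of $U$, outputs those of $V$) for round $U,V$ of equal dimension $m$ with matching $(m-1)$-boundaries ($U$ round iff $\partial_{k-1}U=\partial_k^-U\cap\partial_k^+U$ for $k<\dim U$). Submolecules $V\sqsubseteq U$: smallest class of embeddings containing isomorphisms, closed under composition, containing $U\hookrightarrow U\#_kV\hookleftarrow V$. $\mathrm{frdim}\,V$ is the dimension of $\bigcup\{\mathrm{cl}\{x\}\cap\mathrm{cl}\{y\}:x\ne y\text{ maximal in }V\}$; for $k\ge-1$, $\mathcal{M}_kV$ is the directed graph whose vertices are the maximal elements of $V$ of dimension $>k$, with an edge $x\to y$ iff some $k$-dimensional element lies in $\partial_k^+\mathrm{cl}\{x\}\cap\partial_k^-\mathrm{cl}\{y\}$.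 $U$ is frame-acyclic if $\mathcal{M}_{\mathrm{frdim}W}W$ is acyclic for every $W\sqsubseteq U$. A linearly ordered partition of a set is a partition with a linear order $(E_1,\dots,E_m)$ of its classes. A $k$-pre-ordering of $U$ is a linearly ordered partition of the vertices of $\mathcal{M}_kU$ such that for every edge $x\to y$ the class of $x$ is $\le$ the class of $y$; a $k$-ordering is a $k$-pre-ordering all of whose classes are singletons. $L$ refines $K$ if each class of $K$ is the union of a block of consecutive classes of $L$, in order. *)

From HB Require Import structures.
From mathcomp Require Import all_boot all_order all_algebra.
Set Implicit Arguments. Unset Strict Implicit. Unset Printing Implicit Defensive.
Import Order.TTheory GRing.Theory Num.Theory.

(* An ogposet is a finite type with, for each sign b (false = -,       *)
(* true = +), a relation  face b x y  meaning  y \in \partial^b x.      *)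
(* Gradedness (all maximal chains in cl{x} have the same length        *)
(* dim x) is expressed by a grading function: covers decrease the      *)
(* grade by exactly one, and elements of positive grade are not        *)
(* minimal (so minimal elements have grade 0).                         *)
Record ogposet := Ogposet {
  og_sort :> finType;
  face : bool -> rel og_sort;
  gdim : og_sort -> nat;
  face_disj : forall x y, ~~ (face false x y && face true x y);
  face_gdim : forall b x y, face b x y -> gdim x = (gdim y).+1;
  gdim_face : forall x, 0 < gdim x -> exists b y, face b x y
}.

Section OgDefs.
Variable P : ogposet.

Definition facerel : rel P := fun x y => face false x y || face true x y.
Definition ogle (y x : P) : bool := connect facerel x y.
Definition clos (A : {set P}) : {set P} := [set y | [exists x in A, ogle y x]].
Definition closed (A : {set P}) : bool := clos A \subset A.
Definition maximal_in (A : {set P}) (x : P) : bool :=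
  (x \in A) && [forall y in A, ogle x y ==> (y == x)].

Definition setdimN (A : {set P}) : nat := \max_(x in A) gdim x.
Definition odim : nat := setdimN [set: P].
Definition setdimZ (A : {set P}) : int :=
  if A == set0 then (-1)%R else Posz (setdimN A).

(* \partial_k^a A, for a = false (-) or true (+), k >= 0 *)
Definition bd (a : bool) (k : nat) (A : {set P}) : {set P} :=
  clos [set x in A | ((gdim x == k) && [forall y in A, ~~ face (~~ a) y x])
                     || (maximal_in A x && (gdim x < k))].
Definition bdall (k : nat) (A : {set P}) : {set P} := bd false k A :|: bd true k A.
(* \partial_{k-1}^a A and \partial_{k-1} A, with \partial_{-1} = empty *)
Definition bdp (a : bool) (k : nat) (A : {set P}) : {set P} :=
  if k is k'.+1 then bd a k' A else set0.
Definition bdpall (k : nat) (A : {set P}) : {set P} :=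
  if k is k'.+1 then bdall k' A else set0.

Definition round : Prop :=
  forall k, k < odim ->
    bd false k [set: P] :&: bd true k [set: P] = bdpall k [set: P].

Definition maxel (x : P) : bool := maximal_in [set: P] x.

Definition frdim : int :=
  setdimZ (\bigcup_(x | maxel x) \bigcup_(y | maxel y && (y != x))
             (clos [set x] :&: clos [set y])).

Definition Mvert (k : int) (x : P) : bool := maxel x && (k < Posz (gdim x))%R.
Definition Medge (k : int) (x y : P) : bool :=
  Mvert k x && Mvert k y &&
  match k with
  | Posz n => [exists z, (gdim z == n) && (z \in bd true n (clos [set x]))
                                      && (z \in bd false n (clos [set y]))]
  | Negz _ => false
  end.
Definition Macyclic (k : int) : Prop :=
  forall x y, Medge k x y -> ~~ connect (Medge k) y x.

(* A linearly ordered partition (E_0, ..., E_{m-1}) of the vertices of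
   M_k is encoded by the map c sending a vertex to the index of its class;
   classes are nonempty. *)
Definition preordering (k : int) (m : nat) (c : P -> nat) : Prop :=
  [/\ (forall x, Mvert k x -> c x < m),
      (forall i, i < m -> exists x, Mvert k x /\ c x = i)
    & (forall x y, Medge k x y -> c x <= c y)].
Definition ordering (k : int) (m : nat) (c : P -> nat) : Prop :=
  preordering k m c /\ {in Mvert k &, injective c}.
(* L (encoded by cL) refines K (encoded by cK): each class of K is the
   union of a block of consecutive classes of L, in order; i.e. class
   indices of K are a nondecreasing function of class indices of L. *)
Definition refines (k : int) (cL cK : P -> nat) : Prop :=
  exists h : nat -> nat, {homo h : i j / i <= j} /\
    forall x, Mvert k x -> cK x = h (cL x).

End OgDefs.

Definition og_iso (P Q : ogposet) (f : P -> Q) : Prop :=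
  bijective f /\ forall b x y, face b x y = face b (f x) (f y).
Definition og_emb (P Q : ogposet) (f : P -> Q) : Prop :=
  [/\ injective f,
      (forall b x y, face b x y = face b (f x) (f y))
    & (forall b x z, face b (f x) z -> exists y, z = f y)].

(* W (with i : U -> W, j : V -> W) is the pasting U #_k V, i.e. the
   pushout of U and V along the isomorphism \partial_k^+ U ~ \partial_k^- V *)
Definition is_paste (k : nat) (U V W : ogposet) (i : U -> W) (j : V -> W) : Prop :=
  [/\ og_emb i, og_emb j,
      (forall w, (exists x, w = i x) \/ (exists y, w = j y)),
      (forall x, x \in bd true k [set: U] <-> exists y, i x = j y)
    & (forall y, y \in bd false k [set: V] <-> exists x, i x = j y)].

Definition is_rewrite (U V W : ogposet) (i : U -> W) (j : V -> W) (t : W) : Prop :=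
  [/\ [/\ round U, round V & odim U = odim V],
      og_emb i /\ og_emb j,
      [/\ (forall w, w != t -> (exists x, w = i x) \/ (exists y, w = j y)),
          (forall x, i x != t)
        & (forall y, j y != t)],
      [/\ (forall x, x \in bdpall (odim U) [set: U] <-> exists y, i x = j y),
          (forall y, y \in bdpall (odim V) [set: V] <-> exists x, i x = j y)
        & (forall a x y, i x = j y ->
             (x \in bdp a (odim U) [set: U]) = (y \in bdp a (odim V) [set: V]))]
    & (forall w, face false t w <-> exists2 x, maxel x & w = i x) /\
      (forall w, face true t w <-> exists2 y, maxel y & w = j y)].

Inductive molecule : ogposet -> Prop :=
| mol_point (P : ogposet) : #|P| = 1 -> molecule P
| mol_iso (P Q : ogposet) (f : P -> Q) : molecule P -> og_iso f -> molecule Q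
| mol_paste (k : nat) (U V W : ogposet) (i : U -> W) (j : V -> W) :
    molecule U -> molecule V -> is_paste k i j -> molecule W
| mol_rewrite (U V W : ogposet) (i : U -> W) (j : V -> W) (t : W) :
    molecule U -> molecule V -> is_rewrite i j t -> molecule W.

Inductive subm : forall (W U : ogposet), (W -> U) -> Prop :=
| subm_iso (W U : ogposet) (f : W -> U) : og_iso f -> subm f
| subm_comp (W X U : ogposet) (f : W -> X) (g : X -> U) :
    subm f -> subm g -> subm (g \o f)
| subm_pasteL (k : nat) (U V W : ogposet) (i : U -> W) (j : V -> W) :
    molecule U -> molecule V -> is_paste k i j -> subm i
| subm_pasteR (k : nat) (U V W : ogposet) (i : U -> W) (j : V -> W) :
    molecule U -> molecule V -> is_paste k i j -> subm j.

Definition frame_acyclic (U : ogposet) : Prop :=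
  forall (W : ogposet) (f : W -> U), subm f -> @Macyclic W (frdim W).

From Pilot Require Import Defs.
From HB Require Import structures.
From mathcomp Require Import all_boot all_order all_algebra.
From mathcomp Require Import zify.
Import Order.TTheory GRing.Theory Num.Theory.

Set Implicit Arguments.
Unset Strict Implicit.
Unset Printing Implicit Defensive.

(* The graph M_k U has no edges between distinct vertices unless k is the frame
   dimension, since the k-dimensional witness of an edge x -> y lies in
   cl{x} and cl{y}.  So frame-acyclicity applied to U itself shows that M_k U
   is acyclic up to loops.
   A pre-ordering is refined by any linear extension of M_k U that sorts first
   by the class of the pre-ordering: rank the vertices lexicographically by
   class, by number of predecessors in M_k U, and finally by an arbitrary
   enumeration of U. *)

Section FrameDimension.
Variable P : ogposet.

Lemma clos_closed (A : {set P}) : Defs.closed (clos A).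
Proof.
apply/subsetP=> z; rewrite !inE => /existsP[w /andP[]].
rewrite inE => /existsP[x /andP[xA le_wx] le_zw].
by apply/existsP; exists x; rewrite xA; apply: connect_trans le_wx le_zw.
Qed.

Lemma clos_subset (A B : {set P}) : A \subset B -> clos A \subset clos B.
Proof.
move=> /subsetP AB; apply/subsetP=> z; rewrite !inE => /existsP[w /andP[wA le_zw]].
by apply/existsP; exists w; rewrite AB.
Qed.

Lemma bd_subset (a : bool) (n : nat) (A : {set P}) : Defs.closed A -> bd a n A \subset A.
Proof.
move=> clA; apply: subset_trans clA; apply: clos_subset.
by apply/subsetP=> z; rewrite inE => /andP[].
Qed.

Lemma Medge_frdim (k : nat) (x y : P) :
  (@frdim P <= Posz k)%R -> Medge (Posz k) x y -> x != y -> @frdim P = Posz k.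
Proof.
move=> le_fr_k /andP[/andP[/andP[max_x _] /andP[max_y _]]].
move=> /existsP[z /andP[/andP[/eqP dim_z zx] zy]] neq_xy.
have z_frame : z \in \bigcup_(x | maxel x) \bigcup_(y | maxel y && (y != x))
                       (clos [set x] :&: clos [set y]).
  apply/bigcupP; exists x => //; apply/bigcupP; exists y; first by rewrite max_y eq_sym.
  have bd_clos a (w : P) : bd a k (clos [set w]) \subset clos [set w].
    exact: bd_subset _ _ (clos_closed _).
  by rewrite inE (subsetP (bd_clos _ _) z zx) (subsetP (bd_clos _ _) z zy).
move: le_fr_k; rewrite /frdim /setdimZ.
case: eqP => [frame0|_]; first by rewrite frame0 inE in z_frame.
rewrite lez_nat => le_fr_k; congr Posz; apply/eqP; rewrite eqn_leq le_fr_k /=.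
by rewrite -dim_z; apply: leq_bigmax_cond.
Qed.

Lemma frame_acyclic_Macyclic : frame_acyclic P -> @Macyclic P (@frdim P).
Proof. by move=> fa; apply: (fa P id); apply: subm_iso; split=> //; exists id. Qed.

Lemma frame_acyclic_Medge (k : nat) (x y : P) :
  frame_acyclic P -> (@frdim P <= Posz k)%R ->
  Medge (Posz k) x y -> x != y -> ~~ connect (Medge (Posz k)) y x.
Proof.
move=> fa le_fr_k Exy neq_xy.
by have := frame_acyclic_Macyclic fa; rewrite (Medge_frdim le_fr_k Exy neq_xy); apply.
Qed.

End FrameDimension.

Section LinearExtension.
Variables (T : finType) (E : rel T).
Hypothesis E_acyclic : forall x y, E x y -> ~~ connect E y x.

Definition connect_rank (x : T) : nat := #|[set z | connect E z x]|.

Lemma connect_rank_lt (x y : T) : E x y -> connect_rank x < connect_rank y.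
Proof.
move=> Exy; apply: proper_card; apply/properP; split.
  apply/subsetP=> z; rewrite !inE => zx.
  exact: connect_trans zx (connect1 Exy).
by exists y; rewrite inE ?connect0 ?E_acyclic.
Qed.

Lemma exists_injective_key (c : T -> nat) :
  (forall x y, E x y -> c x <= c y) ->
  exists key : T -> nat, [/\ injective key,
    forall x y, E x y -> key x < key y & forall x y, c x < c y -> key x < key y].
Proof.
move=> c_mono; pose N := #|T|.+1.
have rank_lt x : connect_rank x < N by rewrite ltnS max_card.
have idx_lt (x : T) : enum_rank x < N by rewrite (leq_trans (ltn_ord _)) // cardT size_enum_ord.
exists (fun x => (c x * N + connect_rank x) * N + enum_rank x); split.
- move=> x y /(congr1 (modn^~ N)); rewrite !modnMDl !modn_small // => eq_idx.
  exact/enum_rank_inj/val_inj.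
- move=> x y Exy; have := c_mono _ _ Exy; have := connect_rank_lt Exy.
  by have := idx_lt x; nia.
- by move=> x y lt_c; have := rank_lt x; have := idx_lt x; nia.
Qed.

End LinearExtension.

Lemma ranking_of_injective (T : finType) (V : pred T) (key : T -> nat) :
  injective key ->
  exists r : T -> nat, [/\ forall x, V x -> r x < #|V|,
    forall i, i < #|V| -> exists x, V x /\ r x = i
  , {in V &, injective r} & {in V &, forall x y, (r x < r y) = (key x < key y)}].
Proof.
move=> key_inj; pose r x := #|[set z | V z & key z < key x]|.
have r_lt x y : V x -> key x < key y -> r x < r y.
  move=> Vx lt_xy; apply: proper_card; apply/properP; split.
    by apply/subsetP=> z; rewrite !inE => /andP[-> /ltn_trans->].
  by exists x; rewrite inE ?Vx ?lt_xy ?ltnn.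
have r_mono : {in V &, forall x y, (r x < r y) = (key x < key y)}.
  move=> x y Vx Vy; apply/idP/idP; last exact: r_lt.
  case: (ltngtP (key x) (key y)) => // [/(r_lt _ _ Vy) lt_yx|/key_inj->].
    by move=> /(ltn_trans lt_yx); rewrite ltnn.
  by rewrite ltnn.
have r_bound x : V x -> r x < #|V|.
  move=> Vx; rewrite -cardsE; apply: proper_card; apply/properP; split.
    by apply/subsetP=> z; rewrite !inE => /andP[].
  by exists x; rewrite inE ?Vx // ltnn.
have r_inj : {in V &, injective r}.
  move=> x y Vx Vy eq_r; apply: key_inj.
  case: (ltngtP (key x) (key y)) => // [/(r_lt _ _ Vx)|/(r_lt _ _ Vy)].
    by rewrite eq_r ltnn.
  by rewrite eq_r ltnn.
exists r; split=> // i lt_i.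
have r_uniq : uniq (map r (enum V)).
  by rewrite map_inj_in_uniq ?enum_uniq // => x y; rewrite !mem_enum; apply: r_inj.
have r_sub : {subset map r (enum V) <= iota 0 #|V|}.
  by move=> j /mapP[x]; rewrite mem_enum mem_iota => Vx ->; apply: r_bound.
have r_size : size (iota 0 #|V|) <= size (map r (enum V)).
  by rewrite size_iota size_map -cardE.
have [_ r_onto] := uniq_min_size r_uniq r_sub r_size.
have : i \in map r (enum V) by rewrite r_onto mem_iota.
by case/mapP=> x; rewrite mem_enum => Vx ->; exists x.
Qed.

Lemma monotone_factorization (T : finType) (V : pred T) (f g : T -> nat) :
  {in V &, forall x y, g x <= g y -> f x <= f y} ->
  exists h : nat -> nat, {homo h : i j / i <= j} /\ forall x, V x -> f x = h (g x).
Proof.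
move=> fg_mono; exists (fun i => \max_(z | V z && (g z <= i)) f z); split.
  move=> i j le_ij; apply/bigmax_leqP => z /andP[Vz le_zi].
  by apply: leq_bigmax_cond; rewrite Vz (leq_trans le_zi le_ij).
move=> x Vx; apply/eqP; rewrite eqn_leq; apply/andP; split.
  by apply: leq_bigmax_cond; rewrite Vx leqnn.
by apply/bigmax_leqP => z /andP[Vz le_zx]; apply: fg_mono.
Qed.

Theorem mainTheorem13 (U : ogposet) (k : nat) :
  molecule U -> frame_acyclic U ->
  (frdim U <= (Posz k))%R -> (k < odim U)%N ->
  forall (m : nat) (c : U -> nat), preordering (Posz k) m c ->
  exists (m' : nat) (c' : U -> nat),
    ordering (Posz k) m' c' /\ refines (Posz k) c' c.
Proof.
move=> _ fa le_fr_k _ m c [_ _ c_mono].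
pose E : rel U := fun x y => Medge (Posz k) x y && (x != y).
have E_acyclic x y : E x y -> ~~ connect E y x.
  move=> /andP[Exy neq_xy]; apply: contra (frame_acyclic_Medge fa le_fr_k Exy neq_xy).
  by apply: connect_sub => a b /andP[Eab _]; apply: connect1.
have c_E x y : E x y -> c x <= c y by case/andP=> /c_mono.
have [key [key_inj key_E key_c]] := exists_injective_key E_acyclic c_E.
have [r [r_bound r_onto r_inj r_key]] := ranking_of_injective (@Mvert U (Posz k)) key_inj.
have r_Medge x y : Medge (Posz k) x y -> r x <= r y.
  move=> Exy; have /andP[/andP[Vx Vy] _] := Exy.
  have [->//|neq_xy] := eqVneq x y.
  by rewrite ltnW // r_key // key_E //; apply/andP; split.
exists #|@Mvert U (Posz k)|, r; split; first by split=> //; split.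
apply: monotone_factorization => x y Vx Vy; rewrite leqNgt => /negP not_lt_r.
by rewrite leqNgt; apply/negP => /key_c; rewrite -r_key.
Qed.
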